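(* Let $n\geq 2$, $0<\lambda<1$, $h(x,y)=(\lambda x,\lambda y)$, and let $f:\mathbb{R}^2\to\mathbb{R}^2$ be an orientation preserving homeomorphism with bounded displacement, with $f(0,0)=(0,0)$ as its only fixed point, such that $hfh^{-1}=f^n$. Let $A=\mathbb{R}^2\setminus\{(0,0)\}$ and $\tilde A$ its universal cover. Then there exist lifts $F,H:\tilde A\to\tilde A$ of $f|_A$ and $h|_A$ respectively such that $HFH^{-1}=F^n$.
   Context: Bounded displacement: there is $K>0$ with $|f(p)-p|\leq K$ for all $p\in\mathbb{R}^2$. *)

From Stdlib Require Import Reals.
Open Scope R_scope.

Definition pt : Type := (R * R)%type.
Definition origin : pt := (0, 0).
Definition padd (p q : pt) : pt := (fst p + fst q, snd p + snd q).
Definition psub (p q : pt) : pt := (fst p - fst q, snd p - snd q).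
Definition norm2 (p : pt) : R := sqrt (fst p ^ 2 + snd p ^ 2).
Definition dist2 (p q : pt) : R := norm2 (psub p q).

Definition cont2 (f : pt -> pt) : Prop :=
  forall x eps, 0 < eps -> exists del, 0 < del /\
    forall y, dist2 y x < del -> dist2 (f y) (f x) < eps.

Definition homeo2 (f : pt -> pt) : Prop :=
  cont2 f /\ exists g : pt -> pt, cont2 g /\
    (forall x, g (f x) = x) /\ (forall x, f (g x) = x).

Definition bounded_displacement (f : pt -> pt) : Prop :=
  exists K, 0 < K /\ forall p, dist2 (f p) p <= K.

(* Universal cover of A = R^2 \ {0}: the plane R^2 (coordinates (log r, theta))
   with covering map covA (s, t) = (e^s cos t, e^s sin t).
   Deck transformations: (s, t) |-> (s, t + 2 k pi). *)
Definition covA (u : pt) : pt :=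
  (exp (fst u) * cos (snd u), exp (fst u) * sin (snd u)).

Definition is_lift_A (g G : pt -> pt) : Prop :=
  cont2 G /\ forall u, covA (G u) = g (covA u).

Definition deck (u : pt) : pt := (fst u, snd u + 2 * PI).

(* Orientation preserving: at every point z, the local map
   w |-> f(z+w) - f(z) of A (well defined on A as f is injective)
   has local degree +1, i.e. admits a lift commuting with the deck generator. *)
Definition orientation_preserving (f : pt -> pt) : Prop :=
  forall z, exists G, is_lift_A (fun w => psub (f (padd z w)) (f z)) G /\
    forall u, G (deck u) = deck (G u).

Definition homot (lam : R) (p : pt) : pt := (lam * fst p, lam * snd p).
Definition homot_inv (lam : R) (p : pt) : pt := (fst p / lam, snd p / lam).

(* Far from the origin a map of bounded displacement K moves points by an angle
   of order K / |z|, so one lift F of f turns every far point of the universal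
   cover by less than alpha = pi / (n + 1) (the far region is connected, so the
   lift chosen at one far point works everywhere).  The homothety lifts to a
   translation H in the log-radius direction moving points outward under H^-1.
   Both H F H^-1 and F^n lift h f h^-1 = f^n, and at a far point their angular
   coordinates differ by less than alpha + n alpha = pi, hence by no deck
   translation; two lifts of the same map agreeing at one point coincide. *)
From Stdlib Require Import Reals Lra.
Open Scope R_scope.

Lemma norm2_lt_Rabs_sum x y d : Rabs x + Rabs y < d -> norm2 (x, y) < d.
Proof.
  intro Hd; unfold norm2; cbn [fst snd].
  pose proof (Rabs_pos x); pose proof (Rabs_pos y).
  apply Rle_lt_trans with (Rabs x + Rabs y); auto.
  rewrite <- (sqrt_pow2 (Rabs x + Rabs y)) by lra.
  apply sqrt_le_1_alt.
  rewrite <- (pow2_abs x), <- (pow2_abs y); nra.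
Qed.

Lemma Rabs_snd_le_norm2 x y : Rabs y <= norm2 (x, y).
Proof.
  unfold norm2; cbn [fst snd]; rewrite <- sqrt_Rsqr_abs.
  apply sqrt_le_1_alt; unfold Rsqr; nra.
Qed.

Lemma norm2_le_sqr x y K : norm2 (x, y) <= K -> x ^ 2 + y ^ 2 <= K ^ 2.
Proof.
  unfold norm2; cbn [fst snd]; intro HK.
  assert (Hpos : 0 <= x ^ 2 + y ^ 2) by nra.
  rewrite <- (sqrt_sqrt _ Hpos).
  pose proof (sqrt_pos (x ^ 2 + y ^ 2)); nra.
Qed.

Lemma exp_gt_self x : 0 < x -> x < exp x.
Proof. intro Hx; pose proof (exp_ineq1 x (Rgt_not_eq x 0 Hx)); lra. Qed.

Lemma exp_le x y : x <= y -> exp x <= exp y.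
Proof.
  intros [Hlt | ->]; [left; exact (exp_increasing _ _ Hlt) | lra].
Qed.

Definition ptranslate (a b : R) (u : pt) : pt := (fst u + a, snd u + b).

Lemma cont2_id : cont2 (fun u => u).
Proof. intros x eps He; exists eps; auto. Qed.

Lemma cont2_comp F G : cont2 F -> cont2 G -> cont2 (fun u => F (G u)).
Proof.
  intros HF HG x eps He.
  destruct (HF (G x) eps He) as [d1 [Hd1 H1]].
  destruct (HG x d1 Hd1) as [d2 [Hd2 H2]].
  exists d2; auto.
Qed.

Lemma cont2_iter F n : cont2 F -> cont2 (Nat.iter n F).
Proof.
  intro HF; induction n as [|n IH]; [exact cont2_id | exact (cont2_comp _ _ HF IH)].
Qed.

Lemma cont2_ptranslate a b : cont2 (ptranslate a b).
Proof.
  intros x eps He; exists eps; split; auto; intros y Hy.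
  unfold dist2, psub, ptranslate in *; cbn [fst snd].
  replace (fst y + a - (fst x + a)) with (fst y - fst x) by ring.
  replace (snd y + b - (snd x + b)) with (snd y - snd x) by ring.
  exact Hy.
Qed.

Definition seg (u v : pt) (t : R) : pt :=
  (fst u + t * (fst v - fst u), snd u + t * (snd v - snd u)).

Lemma seg0 u v : seg u v 0 = u.
Proof. destruct u; unfold seg; cbn; f_equal; ring. Qed.

Lemma seg1 u v : seg u v 1 = v.
Proof. destruct u, v; unfold seg; cbn; f_equal; ring. Qed.

Lemma continuity_snd_seg (F : pt -> pt) u v :
  cont2 F -> continuity (fun t => snd (F (seg u v t))).
Proof.
  intros HF t0 eps He.
  destruct (HF (seg u v t0) eps He) as [del [Hdel Hnear]].
  set (M := Rabs (fst v - fst u) + Rabs (snd v - snd u) + 1).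
  assert (HM : 0 < M).
  { pose proof (Rabs_pos (fst v - fst u)); pose proof (Rabs_pos (snd v - snd u)).
    unfold M; lra. }
  exists (del / M); split; [apply Rdiv_lt_0_compat; auto |].
  intros t [_ Ht]; cbn in Ht |- *; unfold R_dist in *.
  eapply Rle_lt_trans; [apply (Rabs_snd_le_norm2 (fst (F (seg u v t)) - fst (F (seg u v t0)))) |].
  apply Hnear; unfold dist2, psub, seg; cbn [fst snd].
  apply norm2_lt_Rabs_sum.
  replace (fst u + t * (fst v - fst u) - (fst u + t0 * (fst v - fst u)))
    with ((t - t0) * (fst v - fst u)) by ring.
  replace (snd u + t * (snd v - snd u) - (snd u + t0 * (snd v - snd u)))
    with ((t - t0) * (snd v - snd u)) by ring.
  rewrite !Rabs_mult.
  assert (Rabs (t - t0) * M < del).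
  { apply Rmult_lt_reg_r with (/ M); [apply Rinv_0_lt_compat; lra |].
    rewrite Rmult_assoc, Rinv_r, Rmult_1_r by lra; exact Ht. }
  pose proof (Rabs_pos (t - t0)); unfold M in *; nra.
Qed.

Lemma continuity_snd_diff_seg (P Q : pt -> pt) u v : cont2 P -> cont2 Q ->
  continuity (fun t => snd (P (seg u v t)) - snd (Q (seg u v t))).
Proof. intros HP HQ; apply continuity_minus; apply continuity_snd_seg; auto. Qed.

Lemma Rabs_lt_IVT (g : R -> R) a : continuity g -> Rabs (g 0) < a ->
  (forall t, 0 <= t <= 1 -> Rabs (g t) <> a) -> Rabs (g 1) < a.
Proof.
  intros Hg H0 Havoid.
  destruct (Rlt_or_le (Rabs (g 1)) a) as [| Hge]; auto; exfalso.
  apply Rabs_def2 in H0 as [H0lo H0hi].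
  assert (Hcst : continuity (fun _ : R => a)) by (apply continuity_const; intros ? ?; reflexivity).
  destruct (Rcase_abs (g 1)) as [Hneg | Hnneg].
  - rewrite Rabs_left in Hge by lra.
    destruct (IVT_cor (fun t => g t + a) 0 1) as [z [Hz Hgz]];
      [apply continuity_plus; auto | lra | nra |].
    apply (Havoid z Hz); rewrite Rabs_left; lra.
  - rewrite Rabs_right in Hge by lra.
    destruct (IVT_cor (fun t => g t - a) 0 1) as [z [Hz Hgz]];
      [apply continuity_minus; auto | lra | nra |].
    apply (Havoid z Hz); rewrite Rabs_right; lra.
Qed.

Lemma covA_deck_shift (s t : R) (k : Z) : covA (s, t + 2 * IZR k * PI) = covA (s, t).
Proof.
  assert (Hs : sin (IZR k * PI) = 0) by (apply sin_eq_0_1; exists k; ring).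
  replace (2 * IZR k * PI) with (2 * (IZR k * PI)) by ring.
  unfold covA; cbn [fst snd].
  rewrite cos_plus, sin_plus, cos_2a_sin, sin_2a, Hs; f_equal; ring.
Qed.

Lemma covA_eq a b : covA a = covA b -> fst a = fst b /\ cos (snd a - snd b) = 1.
Proof.
  unfold covA; intros [= Hx Hy].
  pose proof (exp_pos (fst a)); pose proof (exp_pos (fst b)).
  pose proof (sin2_cos2 (snd a)); pose proof (sin2_cos2 (snd b)); unfold Rsqr in *.
  assert (Hsq : exp (fst a) * exp (fst a) = exp (fst b) * exp (fst b)).
  { transitivity ((exp (fst a) * cos (snd a)) ^ 2 + (exp (fst a) * sin (snd a)) ^ 2);
      [nra | rewrite Hx, Hy; nra]. }
  assert (Hr : exp (fst a) = exp (fst b)) by nra.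
  split; [exact (exp_inv _ _ Hr) |].
  rewrite Hr in Hx, Hy.
  assert (cos (snd a) = cos (snd b)) by (apply Rmult_eq_reg_l with (exp (fst b)); lra).
  assert (sin (snd a) = sin (snd b)) by (apply Rmult_eq_reg_l with (exp (fst b)); lra).
  rewrite cos_minus; nra.
Qed.

Lemma cos_eq_1_small x : cos x = 1 -> Rabs x < PI -> x = 0.
Proof.
  intros Hc Hx; destruct (Req_dec x 0) as [| Hx0]; auto; exfalso.
  assert (Hpos : 0 < Rabs x) by (apply Rabs_pos_lt; exact Hx0).
  assert (cos (Rabs x) < cos 0) by (apply cos_decreasing_1; lra).
  rewrite cos_0 in *.
  destruct (Rcase_abs x);
    [rewrite Rabs_left, cos_neg in * by lra | rewrite Rabs_right in * by lra]; lra.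
Qed.

Lemma Rabs_lt_of_cos_lt x a : 0 < a <= PI -> -PI <= x <= PI -> cos a < cos x -> Rabs x < a.
Proof.
  intros Ha Hx Hc; destruct (Rle_or_lt 0 x).
  - rewrite Rabs_right by lra; apply (cos_decreasing_0 a x); lra.
  - rewrite Rabs_left by lra; rewrite <- (cos_neg x) in Hc.
    apply (cos_decreasing_0 a (- x)); lra.
Qed.

Lemma Rabs_neq_of_cos_lt x a : cos a < cos x -> Rabs x <> a.
Proof.
  intros Hc Hx; subst a.
  destruct (Rcase_abs x); [rewrite Rabs_left, cos_neg in Hc | rewrite Rabs_right in Hc]; lra.
Qed.

Lemma covA_angle_close_eq a b : covA a = covA b -> Rabs (snd a - snd b) < PI -> a = b.
Proof.
  intros Hab Hclose; destruct (covA_eq _ _ Hab) as [Hfst Hcos].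
  pose proof (cos_eq_1_small _ Hcos Hclose).
  destruct a, b; cbn in *; f_equal; lra.
Qed.

(* Uniqueness of lifts: along a segment the angular difference of two lifts of
   the same map is continuous with values in 2 pi Z, hence constant. *)
Lemma covA_lift_unique (P Q : pt -> pt) u0 : cont2 P -> cont2 Q ->
  (forall u, covA (P u) = covA (Q u)) -> P u0 = Q u0 -> forall u, P u = Q u.
Proof.
  intros HP HQ Hcov H0 u; pose proof PI_RGT_0; apply covA_angle_close_eq; auto.
  pose proof (Rabs_lt_IVT (fun t => snd (P (seg u0 u t)) - snd (Q (seg u0 u t))) (PI / 2))
    as Hivt; cbv beta in Hivt; rewrite seg0, seg1, H0 in Hivt.
  assert (Rabs (snd (P u) - snd (Q u)) < PI / 2); [| lra].
  apply Hivt; [apply continuity_snd_diff_seg; auto | rewrite Rminus_diag, Rabs_R0; lra |].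
  intros t _; apply Rabs_neq_of_cos_lt.
  destruct (covA_eq _ _ (Hcov (seg u0 u t))) as [_ ->]; rewrite cos_PI2; lra.
Qed.

Lemma covA_iter (g G : pt -> pt) : (forall u, covA (G u) = g (covA u)) ->
  forall n u, covA (Nat.iter n G u) = Nat.iter n g (covA u).
Proof. intros HG n u; induction n as [|n IH]; simpl; [reflexivity | rewrite HG, IH; reflexivity]. Qed.

Lemma covA_ptranslate_fst a u : covA (ptranslate a 0 u) = homot (exp a) (covA u).
Proof.
  unfold covA, ptranslate, homot; cbn [fst snd].
  rewrite exp_plus, Rplus_0_r; f_equal; ring.
Qed.

Lemma covA_ptranslate_ln lam u : 0 < lam ->
  covA (ptranslate (ln lam) 0 u) = homot lam (covA u) /\
  covA (ptranslate (- ln lam) 0 u) = homot_inv lam (covA u).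
Proof.
  intro Hlam; rewrite !covA_ptranslate_fst, exp_Ropp, exp_ln by exact Hlam.
  split; [reflexivity |].
  unfold homot_inv, homot, Rdiv; f_equal; apply Rmult_comm.
Qed.

Lemma lift_of_fixed_origin f :
  orientation_preserving f -> f origin = origin -> exists G, is_lift_A f G.
Proof.
  intros Hop f0; destruct (Hop origin) as [G [[HGc HGl] _]].
  exists G; split; auto; intro u.
  rewrite HGl, f0; unfold psub, padd, origin; cbn [fst snd].
  rewrite !Rplus_0_l, !Rminus_0_r, <- !surjective_pairing; reflexivity.
Qed.

Lemma ptranslate_fst_cancel a u :
  ptranslate a 0 (ptranslate (- a) 0 u) = u /\ ptranslate (- a) 0 (ptranslate a 0 u) = u.
Proof. destruct u; unfold ptranslate; cbn; split; f_equal; ring. Qed.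

Lemma polar_dist_sqr a b t t' :
  (a * cos t' - b * cos t) ^ 2 + (a * sin t' - b * sin t) ^ 2
  = a ^ 2 + b ^ 2 - 2 * a * b * cos (t' - t).
Proof.
  pose proof (sin2_cos2 t); pose proof (sin2_cos2 t'); unfold Rsqr in *.
  rewrite cos_minus; nra.
Qed.

Lemma exists_angle_representative x : exists k : Z, - PI <= x + 2 * IZR k * PI < PI.
Proof.
  pose proof PI_RGT_0.
  set (y := (x - PI) / (2 * PI)).
  assert (Hy : x = 2 * PI * y + PI) by (unfold y; field; lra).
  destruct (archimed y) as [Hup1 Hup2].
  exists (- up y)%Z; rewrite opp_IZR, Hy.
  generalize (IZR (up y)) Hup1 Hup2; intros N HN1 HN2.
  assert (0 < PI * (N - y)) by (apply Rmult_lt_0_compat; lra).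
  assert (0 <= PI * (1 - (N - y))) by (apply Rmult_le_pos; lra).
  split; lra.
Qed.

(* Beyond this radius r, a lift of a K-displacement moves the angle by theta
   with r^2 (1 - cos theta) <= K^2 < r^2 (1 - cos al). *)
Definition far_radius (K al : R) : R := 2 * K + K / (1 - cos al).

Lemma far_seg B u v t : B < exp (fst u) -> B < exp (fst v) -> 0 <= t <= 1 ->
  B < exp (fst (seg u v t)).
Proof.
  intros Hu Hv Ht; unfold seg; cbn [fst].
  destruct (Rle_or_lt (fst u) (fst v)).
  - eapply Rlt_le_trans; [exact Hu | apply exp_le; nra].
  - eapply Rlt_le_trans; [exact Hv | apply exp_le; nra].
Qed.

Section BoundedDisplacementLift.

Variables (g : pt -> pt) (K : R).
Hypothesis HK : 0 < K.
Hypothesis Hdisp : forall p, dist2 (g p) p <= K.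

Lemma lift_displacement F u : covA (F u) = g (covA u) ->
  Rabs (exp (fst (F u)) - exp (fst u)) <= K /\
  (2 * K <= exp (fst u) -> exp (fst u) ^ 2 * (1 - cos (snd (F u) - snd u)) <= K ^ 2).
Proof.
  intro HF; pose proof (Hdisp (covA u)) as Hd; rewrite <- HF in Hd.
  unfold dist2, psub, covA in Hd; cbn [fst snd] in Hd.
  apply norm2_le_sqr in Hd; rewrite polar_dist_sqr in Hd.
  set (a := exp (fst (F u))) in *; set (b := exp (fst u)) in *.
  set (c := cos (snd (F u) - snd u)) in *.
  assert (0 < a) by apply exp_pos; assert (0 < b) by apply exp_pos.
  pose proof (COS_bound (snd (F u) - snd u)) as [Hc1 Hc2]; fold c in Hc1, Hc2.
  assert (0 <= a * b * (1 - c)) by (apply Rmult_le_pos; nra).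
  assert (Hab : (a - b) ^ 2 <= K ^ 2) by nra.
  split.
  - destruct (Rcase_abs (a - b)); [rewrite Rabs_left | rewrite Rabs_right]; nra.
  - intro HbK; assert (a - b >= - K) by (destruct (Rle_or_lt (a - b) (- K)); nra).
    assert (b * (1 - c) * b <= b * (1 - c) * (2 * a)) by (apply Rmult_le_compat_l; nra).
    pose proof (pow2_ge_0 (a - b)); nra.
Qed.

Section Angle.

Variable al : R.
Hypothesis Hal : 0 < al <= PI.

Lemma one_sub_cos_pos : 0 < 1 - cos al.
Proof.
  assert (cos al < cos 0) by (apply cos_decreasing_1; lra).
  rewrite cos_0 in *; lra.
Qed.

Lemma far_radius_ge : 2 * K <= far_radius K al.
Proof.
  pose proof one_sub_cos_pos; unfold far_radius.
  assert (0 < K / (1 - cos al)) by (apply Rdiv_lt_0_compat; lra); lra.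
Qed.

Lemma lift_cos_angle_far F u : covA (F u) = g (covA u) ->
  far_radius K al < exp (fst u) -> cos al < cos (snd (F u) - snd u).
Proof.
  intros HF Hfar; pose proof one_sub_cos_pos as Hde; pose proof far_radius_ge.
  destruct (lift_displacement F u HF) as [_ Hang]; specialize (Hang ltac:(lra)).
  assert (Hde_far : K <= far_radius K al * (1 - cos al))
    by (unfold far_radius; field_simplify; [nra | lra]).
  set (b := exp (fst u)) in *; set (c := cos (snd (F u) - snd u)) in *.
  assert (K < b * (1 - cos al)) by nra.
  assert (K ^ 2 < b ^ 2 * (1 - cos al)) by nra.
  nra.
Qed.

(* The lift is normalised at one far point; connectedness of the far region
   (a half-plane in log-polar coordinates) propagates the bound. *)
Lemma exists_small_rotation_lift G : is_lift_A g G ->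
  exists F, is_lift_A g F /\
    forall v, far_radius K al < exp (fst v) -> Rabs (snd (F v) - snd v) < al.
Proof.
  intros [HGc HG]; pose proof far_radius_ge as HB.
  set (B := far_radius K al) in *.
  set (u0 := (B, 0)).
  assert (Hu0 : B < exp (fst u0)) by exact (exp_gt_self B ltac:(lra)).
  destruct (exists_angle_representative (snd (G u0) - snd u0)) as [k Hk].
  set (F := fun u => ptranslate 0 (2 * IZR k * PI) (G u)).
  assert (HF : forall u, covA (F u) = g (covA u)).
  { intro u; unfold F, ptranslate; rewrite Rplus_0_r, covA_deck_shift.
    rewrite <- surjective_pairing; apply HG. }
  assert (HFc : cont2 F) by exact (cont2_comp _ _ (cont2_ptranslate 0 (2 * IZR k * PI)) HGc).
  exists F; split; [split; assumption |].
  assert (HF0 : Rabs (snd (F u0) - snd u0) < al).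
  { apply Rabs_lt_of_cos_lt; [exact Hal | | exact (lift_cos_angle_far F u0 (HF u0) Hu0)].
    unfold F, ptranslate; cbn [snd]; lra. }
  intros v Hv.
  pose proof (Rabs_lt_IVT (fun t => snd (F (seg u0 v t)) - snd (seg u0 v t)) al) as Hivt.
  cbv beta in Hivt; rewrite seg0, seg1 in Hivt; apply Hivt; auto.
  - exact (continuity_snd_diff_seg F (fun u => u) u0 v HFc cont2_id).
  - intros t Ht; apply Rabs_neq_of_cos_lt, lift_cos_angle_far; [apply HF |].
    apply far_seg; assumption.
Qed.

Variable F : pt -> pt.
Hypothesis HF : forall u, covA (F u) = g (covA u).
Hypothesis HFrot : forall v, far_radius K al < exp (fst v) -> Rabs (snd (F v) - snd v) < al.

Lemma iter_rotation_far i u : far_radius K al + INR i * K < exp (fst u) ->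
  Rabs (snd (Nat.iter i F u) - snd u) <= INR i * al.
Proof.
  revert u; induction i as [|i IH]; intros u Hu.
  - cbn; rewrite Rminus_diag, Rabs_R0; lra.
  - rewrite Nat.iter_succ_r, S_INR in *.
    pose proof (pos_INR i).
    destruct (lift_displacement F u (HF u)) as [Hrad _].
    pose proof (Rle_abs (exp (fst u) - exp (fst (F u)))).
    rewrite Rabs_minus_sym in Hrad.
    assert (Hstep : Rabs (snd (F u) - snd u) < al) by (apply HFrot; nra).
    specialize (IH (F u) ltac:(lra)).
    replace (snd (Nat.iter i F (F u)) - snd u)
      with ((snd (Nat.iter i F (F u)) - snd (F u)) + (snd (F u) - snd u)) by ring.
    eapply Rle_trans; [apply Rabs_triang | lra].
Qed.

Lemma conj_iter_angle_close l i u : l <= 0 -> far_radius K al + INR i * K < exp (fst u) ->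
  Rabs (snd (ptranslate l 0 (F (ptranslate (- l) 0 u))) - snd (Nat.iter i F u))
  < (INR i + 1) * al.
Proof.
  intros Hl Hu; pose proof (iter_rotation_far i u Hu).
  assert (Hout : exp (fst u) <= exp (fst (ptranslate (- l) 0 u)))
    by (apply exp_le; unfold ptranslate; cbn; lra).
  pose proof (pos_INR i).
  assert (Hstep := HFrot (ptranslate (- l) 0 u) ltac:(nra)).
  change (snd (ptranslate (- l) 0 u)) with (snd u + 0) in Hstep; rewrite Rplus_0_r in Hstep.
  unfold ptranslate at 1; cbn [snd]; rewrite Rplus_0_r.
  replace (snd (F (ptranslate (- l) 0 u)) - snd (Nat.iter i F u))
    with ((snd (F (ptranslate (- l) 0 u)) - snd u) - (snd (Nat.iter i F u) - snd u)) by ring.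
  eapply Rle_lt_trans; [apply Rabs_triang |]; rewrite Rabs_Ropp; lra.
Qed.

End Angle.

End BoundedDisplacementLift.

Theorem mainTheorem12 (n : nat) (lam : R) (f : pt -> pt) :
  (2 <= n)%nat ->
  0 < lam < 1 ->
  homeo2 f ->
  orientation_preserving f ->
  bounded_displacement f ->
  (forall p, f p = p <-> p = origin) ->
  (forall p, homot lam (f (homot_inv lam p)) = Nat.iter n f p) ->
  exists F H Hinv : pt -> pt,
    is_lift_A f F /\ is_lift_A (homot lam) H /\
    (forall u, H (Hinv u) = u /\ Hinv (H u) = u) /\
    (forall u, H (F (Hinv u)) = Nat.iter n F u).
Proof.
  intros _ Hlam _ Hop [K [HK Hdisp]] Hfix Hconj.
  destruct (lift_of_fixed_origin f Hop (proj2 (Hfix origin) eq_refl)) as [G HG].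
  pose proof PI_RGT_0; pose proof (pos_INR n).
  set (al := PI / (INR n + 1)).
  assert (Hal : 0 < al <= PI) by (unfold al; split; [apply Rdiv_lt_0_compat |
    apply Rmult_le_reg_r with (INR n + 1); [| field_simplify]]; nra).
  destruct (exists_small_rotation_lift f K HK Hdisp al Hal G HG) as [F [[HFc HF] HFrot]].
  assert (Hl : ln lam <= 0) by (rewrite <- ln_1; left; apply ln_increasing; lra).
  pose proof (fun u => covA_ptranslate_ln lam u (proj1 Hlam)) as HH.
  exists F, (ptranslate (ln lam) 0), (ptranslate (- ln lam) 0).
  split; [split; assumption |].
  split; [split; [apply cont2_ptranslate | apply HH] |].
  split; [intro u; apply ptranslate_fst_cancel |].
  assert (Hcov : forall u, covA (ptranslate (ln lam) 0 (F (ptranslate (- ln lam) 0 u)))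
                         = covA (Nat.iter n F u)).
  { intro u; rewrite (proj1 (HH _)), HF, (proj2 (HH _)), Hconj.
    symmetry; apply covA_iter, HF. }
  set (u1 := (far_radius K al + INR n * K, 0)).
  apply (covA_lift_unique _ _ u1).
  - exact (cont2_comp _ _ (cont2_ptranslate _ _) (cont2_comp _ _ HFc (cont2_ptranslate _ _))).
  - apply cont2_iter, HFc.
  - exact Hcov.
  - apply covA_angle_close_eq; [apply Hcov |].
    replace PI with ((INR n + 1) * al) by (unfold al; field; lra).
    apply (conj_iter_angle_close f K HK Hdisp al F HF HFrot); [exact Hl |].
    pose proof (far_radius_ge K HK al Hal).
    exact (exp_gt_self (far_radius K al + INR n * K) ltac:(nra)).
Qed.
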